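(* For any $\tilde x\in\widetilde{\mathcal{X}}_\ell$ and any $\tilde y\in\widetilde{\mathcal{Y}}_{\mathcal{M}}(\tilde x)$, the distribution $Q(\tilde y,\tilde x,\Xi(\tilde x))$ has the submodular dominance property: for every submodular function $f:\{0,1\}^n\to\mathbb{R}$, $$\mathbb{E}_{\hat y\sim Q(\tilde y,\tilde x,\Xi(\tilde x))}[f(\hat y)]\ \ge\ \mathbb{E}_{\hat y\sim\mathbf{Ind}(\tilde y)}[f(\hat y)].$$
   Context: $\mathcal{M}$ is a matroid on $[n]$ with matroid polytope $\mathcal{P}(\mathcal{M})$. $\mathcal{X}_\ell=\{x\in\{0,1\}^n:\sum_ix_i\le\ell\}$, $\widetilde{\mathcal{X}}_\ell=\{\tilde x\in[0,1]^n:\sum_i\tilde x_i\le\ell\}$, $\widetilde{\mathcal{Y}}_{\mathcal{M}}(\tilde x)=\{\tilde y\in[0,1]^n:\tilde y\in\mathcal{P}(\mathcal{M}),\tilde y\le\tilde x\}$. For $p\in[0,1]^n$, $\mathbf{Ind}(p)$ is the distribution of a random vector in $\{0,1\}^n$ with independent coordinates, coordinate $i$ equal to $1$ with probability $p_i$. $\Xi$ is randomized pipage rounding (Chekuri–Vondrák–Zenklusen 2009) from $\widetilde{\mathcal{X}}_\ell$ to $\mathcal{X}_\ell$: repeatedly pick two fractional coordinates $i,j$, set $\epsilon_1=\min(1-\tilde x_i,\tilde x_j)$, $\epsilon_2=\min(\tilde x_i,1-\tilde x_j)$, and with probability $\epsilon_2/(\epsilon_1+\epsilon_2)$ move to $(\tilde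 x_i+\epsilon_1,\tilde x_j-\epsilon_1)$, else to $(\tilde x_i-\epsilon_2,\tilde x_j+\epsilon_2)$, until integral (a lone fractional coordinate is handled as in that reference). The randomized map $Q(\tilde y,\tilde x,x)$: $a_i=\tilde y_i/\tilde x_i$ if $\tilde x_i\ne0$, else $0$; independent $c_i\sim\mathrm{Bernoulli}(a_i)$; output $\hat y$ with $\hat y_i=1$ iff $x_i=1$ and $c_i=1$. $Q(\tilde y,\tilde x,\Xi(\tilde x))$ is the distribution of $Q(\tilde y,\tilde x,x)$ with $x\sim\Xi(\tilde x)$ independent of the $c_i$. *)

(* Discrete distributions over {0,1}^n are functions
   {ffun 'I_n -> bool} -> R (probability mass functions). *)
From HB Require Import structures.
From mathcomp Require Import all_boot all_order all_algebra.
Set Implicit Arguments. Unset Strict Implicit. Unset Printing Implicit Defensive.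
Import Order.TTheory GRing.Theory Num.Theory.
Local Open Scope ring_scope.

Section Defs.
Variables (R : realFieldType) (n : nat).

Definition bvec := {ffun 'I_n -> bool}.

Definition is_matroid (M : {set {set 'I_n}}) : Prop :=
  [/\ set0 \in M,
      (forall A B : {set 'I_n}, B \in M -> A \subset B -> A \in M) &
      (forall A B : {set 'I_n}, A \in M -> B \in M -> (#|A| < #|B|)%N ->
          exists2 e, e \in B :\: A & e |: A \in M)].

Definition matroid_polytope (M : {set {set 'I_n}}) (y : 'I_n -> R) : Prop :=
  exists lam : {set 'I_n} -> R,
    [/\ forall S, 0 <= lam S,
        forall S, S \notin M -> lam S = 0,
        \sum_(S : {set 'I_n}) lam S = 1 &
        forall i, y i = \sum_(S : {set 'I_n} | i \in S) lam S].

Definition in01 (x : 'I_n -> R) : Prop := forall i, 0 <= x i <= 1.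

Definition Xtilde (l : nat) (x : 'I_n -> R) : Prop :=
  in01 x /\ \sum_i x i <= l%:R.

Definition Ytilde (M : {set {set 'I_n}}) (x y : 'I_n -> R) : Prop :=
  [/\ in01 y, matroid_polytope M y & forall i, y i <= x i].

Definition Ind (p : 'I_n -> R) (y : bvec) : R :=
  \prod_i (if y i then p i else 1 - p i).

Definition expect (P : bvec -> R) (f : bvec -> R) : R :=
  \sum_(y : bvec) P y * f y.

Definition submodular (f : bvec -> R) : Prop :=
  forall x y : bvec,
    f [ffun i => x i || y i] + f [ffun i => x i && y i] <= f x + f y.

Definition upd (x : 'I_n -> R) (i : 'I_n) (v : R) : 'I_n -> R :=
  fun k => if k == i then v else x k.

Definition pip_e1 (x : 'I_n -> R) (i j : 'I_n) : R := Num.min (1 - x i) (x j).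
Definition pip_e2 (x : 'I_n -> R) (i j : 'I_n) : R := Num.min (x i) (1 - x j).

Definition fractional (v : R) : bool := (0 < v) && (v < 1).

(* pipage x D : D is an output distribution of randomized pipage rounding
   started at x, for SOME (adaptive) choice of the pair of fractional
   coordinates at every step. *)
Inductive pipage : ('I_n -> R) -> (bvec -> R) -> Prop :=
| pip_int x :
    (forall i, x i = 0 \/ x i = 1) ->
    pipage x (fun y => if y == [ffun i => x i == 1] then 1 else 0)
| pip_pair x (i j : 'I_n) D1 D2 :
    i != j -> fractional (x i) -> fractional (x j) ->
    pipage (upd (upd x i (x i + pip_e1 x i j)) j (x j - pip_e1 x i j)) D1 ->
    pipage (upd (upd x i (x i - pip_e2 x i j)) j (x j + pip_e2 x i j)) D2 ->
    pipage x (fun y =>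
      pip_e2 x i j / (pip_e1 x i j + pip_e2 x i j) * D1 y +
      (1 - pip_e2 x i j / (pip_e1 x i j + pip_e2 x i j)) * D2 y)
| pip_lone x (i : 'I_n) D1 D0 :
    fractional (x i) -> (forall k, k != i -> x k = 0 \/ x k = 1) ->
    pipage (upd x i 1) D1 -> pipage (upd x i 0) D0 ->
    pipage x (fun y => x i * D1 y + (1 - x i) * D0 y).

(* Q(y~, x~, D): x ~ D, independent c_i ~ Bernoulli(a_i), yhat = x /\ c. *)
Definition acoef (yt xt : 'I_n -> R) (i : 'I_n) : R :=
  if xt i != 0 then yt i / xt i else 0.

Definition Qdist (yt xt : 'I_n -> R) (D : bvec -> R) (yh : bvec) : R :=
  \sum_(x : bvec) \sum_(c : bvec)
     D x * Ind (acoef yt xt) c *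
     (if yh == [ffun i => x i && c i] then 1 else 0).

End Defs.

From HB Require Import structures.
From mathcomp Require Import all_boot all_order all_algebra.
From mathcomp Require Import ring lra.
Import Order.TTheory GRing.Theory Num.Theory.
Local Open Scope ring_scope.
Set Implicit Arguments. Unset Strict Implicit. Unset Printing Implicit Defensive.

(* The multilinear extension F(x) = E_{Ind x}[g] of a submodular g has
   nonpositive mixed second derivatives, so it is affine along each e_i and
   convex along each e_i - e_j.  Every step of pipage rounding splits x into
   two points on such a line with x as their barycentre, hence by induction on
   the run F(x~) <= E_{Xi(x~)}[g].  Apply this to the thinned function
   g(x) = E_{c ~ Ind a}[f(x /\ c)], which is again submodular: when
   x ~ Ind(x~) and c ~ Ind(a) are independent, x /\ c ~ Ind(x~ a) = Ind(y~),
   so F(x~) = E_{Ind y~}[f] while E_{Xi(x~)}[g] = E_Q[f]. *)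

Section MultilinearExtension.
Variables (R : realFieldType) (n : nat).
Implicit Types (x : 'I_n -> R) (h : bvec n -> R) (y : bvec n) (i j : 'I_n).

Definition bern (v : R) (b : bool) : R := if b then v else 1 - v.
Definition bsign (b : bool) : R := if b then 1 else -1.

Lemma bern_ge0 v b : 0 <= v <= 1 -> 0 <= bern v b.
Proof. by case/andP=> v0 v1; case: b; rewrite /bern ?subr_ge0. Qed.

Lemma bernD v t b : bern (v + t) b = bern v b + bsign b * t.
Proof. by case: b; rewrite /bern /bsign; ring. Qed.

Lemma prod_indicator (P : pred 'I_n) :
  \prod_k (if P k then 1 else 0 : R) = if [forall k, P k] then 1 else 0.
Proof.
case: (boolP [forall k, P k]) => [/forallP allP | /forallPn [k notPk]].
  by apply: big1 => k _; rewrite allP.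
by rewrite (bigD1 k) //= (negbTE notPk) mul0r.
Qed.

Lemma eq_ffun_forall y (g : 'I_n -> bool) :
  (y == [ffun k => g k]) = [forall k, y k == g k].
Proof.
apply/eqP/forallP => [-> k | eq_yg]; first by rewrite ffunE.
by apply/ffunP => k; rewrite ffunE; apply/eqP.
Qed.

Definition Ind_except1 x i y : R := \prod_(k | k != i) bern (x k) (y k).
Definition Ind_except2 x i j y : R :=
  \prod_(k | (k != i) && (k != j)) bern (x k) (y k).

Lemma Ind_except1E x i y : Ind x y = bern (x i) (y i) * Ind_except1 x i y.
Proof. by rewrite /Ind (bigD1 i). Qed.

Lemma Ind_except2E x i j y : i != j ->
  Ind x y = bern (x i) (y i) * bern (x j) (y j) * Ind_except2 x i j y.
Proof.
by move=> ij; rewrite /Ind (bigD1 i) // (bigD1 j) 1?eq_sym //= mulrA.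
Qed.

Lemma Ind_except2_ge0 x i j y : in01 x -> 0 <= Ind_except2 x i j y.
Proof. by move=> x01; apply: prodr_ge0 => k _; apply: bern_ge0. Qed.

Lemma Ind_ge0 x y : in01 x -> 0 <= Ind x y.
Proof. by move=> x01; apply: prodr_ge0 => k _; apply: (bern_ge0 _ (x01 k)). Qed.

Lemma in01_upd x i v : in01 x -> 0 <= v <= 1 -> in01 (upd x i v).
Proof. by move=> x01 v01 k; rewrite /upd; case: (k == i). Qed.

Lemma Ind_integral x y : (forall i, x i = 0 \/ x i = 1) ->
  Ind x y = if y == [ffun i => x i == 1] then 1 else 0.
Proof.
move=> x_int; rewrite eq_ffun_forall -prod_indicator; apply: eq_bigr => k _.
have neq01 : ((0 : R) == 1) = false by rewrite eq_sym oner_eq0.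
by case: (x_int k) => ->; case: (y k); rewrite ?eqxx ?neq01 ?subr0 ?subrr.
Qed.

Definition transfer x i j (t : R) := upd (upd x i (x i + t)) j (x j - t).

Lemma transfer_opp x i j t :
  transfer x i j (- t) = upd (upd x i (x i - t)) j (x j + t).
Proof. by rewrite /transfer opprK. Qed.

Lemma in01_transfer x i j t : in01 x ->
  0 <= x i + t <= 1 -> 0 <= x j - t <= 1 -> in01 (transfer x i j t).
Proof. by move=> x01 xi01 xj01; apply: in01_upd => //; apply: in01_upd. Qed.

Lemma Ind_transfer x i j t y : i != j ->
  Ind (transfer x i j t) y =
  bern (x i + t) (y i) * bern (x j - t) (y j) * Ind_except2 x i j y.
Proof.
move=> ij; rewrite (Ind_except2E _ _ ij) /transfer /upd eqxx (negbTE ij) eqxx.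
by congr (_ * _); apply: eq_bigr => k /andP[/negbTE -> /negbTE ->].
Qed.

Definition flip i y : bvec n := [ffun k => if k == i then ~~ y k else y k].

Lemma flipK i : involutive (flip i).
Proof. by move=> y; apply/ffunP => k; rewrite !ffunE; case: eqP; rewrite ?negbK. Qed.

Lemma flip_id i j y : j != i -> flip i y j = y j.
Proof. by rewrite ffunE => /negbTE ->. Qed.

Lemma flip_at i y : flip i y i = ~~ y i.
Proof. by rewrite ffunE eqxx. Qed.

Lemma Ind_except2_flipl x i j y : Ind_except2 x i j (flip i y) = Ind_except2 x i j y.
Proof. by apply: eq_bigr => k /andP[ki _]; rewrite flip_id. Qed.

Lemma Ind_except2_flipr x i j y : Ind_except2 x i j (flip j y) = Ind_except2 x i j y.
Proof. by apply: eq_bigr => k /andP[_ kj]; rewrite flip_id. Qed.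

Lemma sum_flip i (F : bvec n -> R) :
  \sum_(y : bvec n) F y = \sum_(y : bvec n | y i) (F y + F (flip i y)).
Proof.
rewrite (bigID (fun y => y i)) big_split /=; congr (_ + _).
rewrite (reindex_inj (inv_inj (flipK i))) /=.
by apply: eq_bigl => y; rewrite flip_at negbK.
Qed.

Lemma sum_flip2 i j (F : bvec n -> R) : i != j ->
  \sum_(y : bvec n) F y = \sum_(y : bvec n | y i && y j)
    (F y + F (flip i y) + F (flip j y) + F (flip i (flip j y))).
Proof.
move=> ij; rewrite (sum_flip i) big_mkcond (sum_flip j) [RHS]big_mkcondl /=.
by apply: eq_bigr => y _; rewrite flip_id //; case: (y i); rewrite ?addr0 ?addrA.
Qed.

Lemma submodular_flip2 h i j y : submodular h -> i != j -> y i -> y j ->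
  h y + h (flip i (flip j y)) <= h (flip i y) + h (flip j y).
Proof.
move=> subh ij yi yj.
have join : [ffun k => flip i y k || flip j y k] = y.
  apply/ffunP => k; rewrite /flip !ffunE.
  have [-> | _] := eqVneq k i; first by rewrite (negbTE ij) yi orbT.
  by have [-> | _] := eqVneq k j; rewrite ?yj ?orbb.
have meet : [ffun k => flip i y k && flip j y k] = flip i (flip j y).
  apply/ffunP => k; rewrite /flip !ffunE.
  have [-> | _] := eqVneq k i; first by rewrite (negbTE ij) yi.
  by have [-> | _] := eqVneq k j; rewrite ?yj ?andbb.
by have := subh (flip i y) (flip j y); rewrite join meet.
Qed.

Definition mlext h x : R := expect (Ind x) h.

(* The mixed partial derivative of [mlext h] in coordinates [i] and [j]. *)
Definition cross_deriv h x i j : R :=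
  \sum_(y : bvec n) bsign (y i) * bsign (y j) * (Ind_except2 x i j y * h y).

Lemma cross_deriv_le0 h x i j : i != j -> in01 x -> submodular h ->
  cross_deriv h x i j <= 0.
Proof.
move=> ij x01 subh; rewrite /cross_deriv (sum_flip2 _ ij).
apply: sumr_le0 => y /andP[yi yj].
have ji : j != i by rewrite eq_sym.
rewrite !Ind_except2_flipl !Ind_except2_flipr (flip_at i (flip j y)) (flip_at i y).
rewrite (flip_id (flip j y) ji) (flip_id y ji) (flip_id y ij) (flip_at j y).
rewrite yi yj /bsign /=.
have := submodular_flip2 subh ij yi yj; have := Ind_except2_ge0 i j y x01.
set q := Ind_except2 x i j y => q0 sub_ineq.
have -> : 1 * 1 * (q * h y) + -1 * 1 * (q * h (flip i y)) +
  1 * -1 * (q * h (flip j y)) + -1 * -1 * (q * h (flip i (flip j y))) =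
  q * (h y + h (flip i (flip j y)) - (h (flip i y) + h (flip j y))) by ring.
by rewrite mulr_ge0_le0 // subr_le0.
Qed.

Lemma mlext_transfer h x i j : i != j -> exists L : R, forall t,
  mlext h (transfer x i j t) = mlext h x + t * L - t ^+ 2 * cross_deriv h x i j.
Proof.
move=> ij; exists (\sum_(y : bvec n) (bsign (y i) * bern (x j) (y j)
                      - bsign (y j) * bern (x i) (y i)) * (Ind_except2 x i j y * h y)).
move=> t; rewrite /mlext /expect /cross_deriv !mulr_sumr -big_split -sumrB /=.
apply: eq_bigr => y _; rewrite Ind_transfer // (Ind_except2E _ _ ij) !bernD.
by ring.
Qed.

Lemma pipage_weight01 (e1 e2 : R) : 0 < e1 -> 0 < e2 -> 0 <= e2 / (e1 + e2) <= 1.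
Proof.
move=> e1_gt0 e2_gt0; have sum_gt0 : 0 < e1 + e2 by rewrite addr_gt0.
by rewrite divr_ge0 ?(ltW e2_gt0) ?(ltW sum_gt0) // ler_pdivrMr // mul1r lerDr ltW.
Qed.

Lemma mlext_transfer_convex h x i j (e1 e2 : R) :
  i != j -> in01 x -> submodular h -> 0 < e1 -> 0 < e2 ->
  mlext h x <= e2 / (e1 + e2) * mlext h (transfer x i j e1)
               + (1 - e2 / (e1 + e2)) * mlext h (transfer x i j (- e2)).
Proof.
move=> ij x01 subh e1_gt0 e2_gt0.
have [L transferE] := mlext_transfer h x ij; rewrite !transferE.
have C_le0 := cross_deriv_le0 ij x01 subh.
set p := e2 / (e1 + e2); set C := cross_deriv h x i j.
have p01 : 0 <= p <= 1 by apply: pipage_weight01.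
have barycentre : p * e1 - (1 - p) * e2 = 0.
  by rewrite /p; field; rewrite gt_eqF ?addr_gt0.
have -> : p * (mlext h x + e1 * L - e1 ^+ 2 * C) +
    (1 - p) * (mlext h x + - e2 * L - (- e2) ^+ 2 * C) =
  mlext h x + L * (p * e1 - (1 - p) * e2) - (p * e1 ^+ 2 + (1 - p) * e2 ^+ 2) * C.
  by ring.
rewrite barycentre mulr0 addr0 lerDl -mulrN mulr_ge0 ?oppr_ge0 //.
case/andP: p01 => p0 p1.
by apply: addr_ge0; apply: mulr_ge0; rewrite ?subr_ge0 ?sqr_ge0.
Qed.

Lemma mlext_coord_affine h x i :
  mlext h x = x i * mlext h (upd x i 1) + (1 - x i) * mlext h (upd x i 0).
Proof.
rewrite /mlext /expect !mulr_sumr -big_split /=; apply: eq_bigr => y _.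
have except_upd v : Ind_except1 (upd x i v) i y = Ind_except1 x i y.
  by apply: eq_bigr => k /negbTE ki; rewrite /upd ki.
rewrite !(Ind_except1E _ i) !except_upd /upd eqxx /bern.
by case: (y i); ring.
Qed.

Lemma expect_mix (a b : R) (D1 D2 : bvec n -> R) h :
  expect (fun y => a * D1 y + b * D2 y) h = a * expect D1 h + b * expect D2 h.
Proof. by rewrite /expect !mulr_sumr -big_split /=; apply: eq_bigr => y _; ring. Qed.

Lemma pipage_moves_in01 x i j : in01 x -> fractional (x i) -> fractional (x j) ->
  [/\ 0 < pip_e1 x i j, 0 < pip_e2 x i j,
      in01 (transfer x i j (pip_e1 x i j)) & in01 (transfer x i j (- pip_e2 x i j))].
Proof.
move=> x01 /andP[xi_gt0 xi_lt1] /andP[xj_gt0 xj_lt1].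
have e1_gt0 : 0 < pip_e1 x i j by rewrite lt_min subr_gt0 xi_lt1 xj_gt0.
have e2_gt0 : 0 < pip_e2 x i j by rewrite lt_min subr_gt0 xi_gt0 xj_lt1.
have e1_le : pip_e1 x i j <= 1 - x i /\ pip_e1 x i j <= x j.
  by rewrite !ge_min !lexx orbT.
have e2_le : pip_e2 x i j <= x i /\ pip_e2 x i j <= 1 - x j.
  by rewrite !ge_min !lexx orbT.
case: e1_le e2_le => e1_le1 e1_le2 [e2_le1 e2_le2].
by split => //; apply: in01_transfer => //; apply/andP; split; lra.
Qed.

Lemma mlext_le_pipage h x D :
  submodular h -> pipage x D -> in01 x -> mlext h x <= expect D h.
Proof.
move=> subh; elim=> {x D}
  [x x_int _ | x i j D1 D2 ij xi_frac xj_frac _ IH1 _ IH2 x01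
             | x i D1 D0 /andP[xi_gt0 xi_lt1] _ _ IH1 _ IH0 x01].
- by apply: ler_sum => y _; rewrite Ind_integral.
- have [e1_gt0 e2_gt0 in01_1 in01_2] := pipage_moves_in01 x01 xi_frac xj_frac.
  have /andP[p_ge0 p_le1] := pipage_weight01 e1_gt0 e2_gt0.
  rewrite -transfer_opp in IH2.
  rewrite expect_mix; apply: le_trans (mlext_transfer_convex ij x01 subh e1_gt0 e2_gt0) _.
  by apply: lerD; apply: ler_wpM2l; rewrite ?subr_ge0 //; [apply: IH1 | apply: IH2].
- rewrite (expect_mix (x i) (1 - x i)) (mlext_coord_affine h x i).
  apply: lerD; apply: ler_wpM2l; rewrite ?subr_ge0 ?(ltW xi_gt0) ?(ltW xi_lt1) //.
  + by apply/IH1/in01_upd; rewrite ?ler01 ?lexx.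
  + by apply/IH0/in01_upd; rewrite ?ler01 ?lexx.
Qed.

End MultilinearExtension.

Section Thinning.
Variables (R : realFieldType) (n : nat).
Implicit Types (x a w : 'I_n -> R) (f : bvec n -> R) (y c z : bvec n).

Definition bmeet y c : bvec n := [ffun k => y k && c k].

Definition thin a f y : R := \sum_(c : bvec n) Ind a c * f (bmeet y c).

Lemma submodular_thin a f : in01 a -> submodular f -> submodular (thin a f).
Proof.
move=> a01 subf y z; rewrite /thin -!big_split /=; apply: ler_sum => c _.
rewrite -!mulrDr ler_wpM2l ?Ind_ge0 //.
have -> : bmeet [ffun k => y k || z k] c = [ffun k => bmeet y c k || bmeet z c k].
  by apply/ffunP => k; rewrite !ffunE; case: (y k) (z k) (c k) => [] [] [].
have -> : bmeet [ffun k => y k && z k] c = [ffun k => bmeet y c k && bmeet z c k].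
  by apply/ffunP => k; rewrite !ffunE; case: (y k) (z k) (c k) => [] [] [].
exact: subf.
Qed.

Lemma expect_meet_mixture (P : bvec n -> R) a f :
  expect (fun z => \sum_(y : bvec n) \sum_(c : bvec n)
                     P y * Ind a c * (if z == bmeet y c then 1 else 0)) f =
  expect P (thin a f).
Proof.
rewrite /expect /thin; under eq_bigr do rewrite mulr_suml.
under eq_bigr do under eq_bigr do rewrite mulr_suml.
rewrite exchange_big; apply: eq_bigr => y _.
rewrite exchange_big mulr_sumr; apply: eq_bigr => c _.
rewrite (bigD1 (bmeet y c)) //= eqxx big1 => [|z /negbTE ->];
  last by rewrite !mulr0 mul0r.
by rewrite addr0 mulr1 mulrA.
Qed.

Lemma Ind_meet x a w z : (forall k, x k * a k = w k) ->
  Ind w z = \sum_(y : bvec n) \sum_(c : bvec n)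
              Ind x y * Ind a c * (if z == bmeet y c then 1 else 0).
Proof.
(* Coordinatewise [P(y k && c k) = x k * a k]; distributing the product of
   the per-coordinate two-point sums recovers the double sum. *)
move=> xa_w.
pose W k b1 b2 := bern (x k) b1 * bern (a k) b2 * (if z k == b1 && b2 then 1 else 0 : R).
have -> : Ind w z = \prod_k \sum_(b1 : bool) \sum_(b2 : bool) W k b1 b2.
  apply: eq_bigr => k _; rewrite !big_bool /W /bern -xa_w.
  by case: (z k) => /=; ring.
rewrite bigA_distr_bigA; apply: eq_bigr => y _.
rewrite bigA_distr_bigA; apply: eq_bigr => c _.
by rewrite /W !big_split /= prod_indicator /bmeet eq_ffun_forall.
Qed.

Lemma expect_Ind_thin x a w f : (forall k, x k * a k = w k) ->
  expect (Ind w) f = expect (Ind x) (thin a f).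
Proof.
move=> xa_w; rewrite -expect_meet_mixture /expect.
by apply: eq_bigr => z _; rewrite (Ind_meet _ xa_w).
Qed.

Lemma acoef_in01 (xt yt : 'I_n -> R) :
  in01 yt -> (forall k, yt k <= xt k) -> in01 (acoef yt xt).
Proof.
move=> yt01 le_yx k; rewrite /acoef; case: eqP => [_ | /eqP xk_neq0] /=.
  by rewrite lexx ler01.
have /andP[yk_ge0 _] := yt01 k.
have xk_gt0 : 0 < xt k by rewrite lt_neqAle eq_sym xk_neq0 (le_trans yk_ge0).
by rewrite divr_ge0 ?(ltW xk_gt0) // ler_pdivrMr // mul1r le_yx.
Qed.

Lemma mul_acoef (xt yt : 'I_n -> R) : in01 yt -> (forall k, yt k <= xt k) ->
  forall k, xt k * acoef yt xt k = yt k.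
Proof.
move=> yt01 le_yx k; rewrite /acoef; case: eqP => [xk0 | /eqP xk_neq0] /=.
  by have /andP[yk_ge0 _] := yt01 k; apply/eqP; rewrite mulr0 eq_le yk_ge0 -xk0 le_yx.
by rewrite mulrC divfK.
Qed.

End Thinning.

Theorem lemma14 (R : realFieldType) (n l : nat) (M : {set {set 'I_n}})
    (xt yt : 'I_n -> R) (D : bvec n -> R) :
  is_matroid M -> Xtilde l xt -> Ytilde M xt yt -> pipage xt D ->
  forall f : bvec n -> R, submodular f ->
    expect (Ind yt) f <= expect (Qdist yt xt D) f.
Proof.
move=> _ [xt01 _] [yt01 _ le_yx] pipD f subf.
rewrite (expect_Ind_thin f (mul_acoef yt01 le_yx)).
have -> : expect (Qdist yt xt D) f = expect D (thin (acoef yt xt) f).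
  exact: expect_meet_mixture.
exact: mlext_le_pipage (submodular_thin (acoef_in01 yt01 le_yx) subf) pipD xt01.
Qed.
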